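(* Let $G_1$ ($n\times k$) and $G_0$ ($n\times l$) be fixed binary matrices such that $\widetilde G=[G_1\ G_0]$ has full column rank $k+l$, let $r=n-k-l$, and let $\mathbf m\in\{0,1\}^k$ be fixed. On the binary defect and erasure channel with the encoding and decoding described in the context, $$P(\widehat{\mathbf m}\neq\mathbf m)\le\sum_{u=d_0}^{n}\beta^u(1-\beta)^{n-u}\sum_{w=d_0}^{u}B_{0,w}\binom{n-w}{u-w}+\sum_{e=d_1}^{n}\alpha^e(1-\alpha)^{n-e}\sum_{w=d_1}^{e}A_w\binom{n-w}{e-w}.$$ If in addition $B_{0,w}\le 2^{-l}\binom nw$ for all $d_0\le w\le n$ and $A_w\le 2^{-r}\binom nw$ for all $d_1\le w\le n$, then $$P(\widehat{\mathbf m}\neq\mathbf m)\le 2^{-l}(1+\beta)^n+2^{-r}(1+\alpha)^n.$$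
   Context: All arithmetic is over $\mathrm{GF}(2)$. $\mathcal C=\{\widetilde G\mathbf x:\mathbf x\in\{0,1\}^{k+l}\}$ is the $[n,k+l]$ code generated by $\widetilde G$, and $A_w$ is its number of codewords of Hamming weight $w$. $d_1$ is the minimum Hamming weight of $G_1\mathbf m'+G_0\mathbf d'$ over all $\mathbf m'\neq\mathbf 0$, $\mathbf d'\in\{0,1\}^l$. $\mathcal C_0^{\perp}=\{\mathbf x\in\{0,1\}^n: G_0^T\mathbf x=\mathbf 0\}$; $B_{0,w}$ is its number of vectors of weight $w$ and $d_0$ its minimum nonzero weight. Binary defect and erasure channel (BDEC) with parameters $(\beta,\alpha)$: each of the $n$ cells is independently defective with probability $\beta$; a defective cell is stuck at $0$ or $1$, each with probability $1/2$, independently. Writing codeword $\mathbf c$ stores $\mathbf c\circ\mathbf s$, where $(\mathbf c\circ\mathbf s)_i=s_i$ if cell $i$ is defective with stuck-at value $s_i$ and $=c_i$ otherwise. Then each of the $n$ stored bits is independently erased with probability $\alpha$ (independently of everything else); $\mathcal V$ is the set of unerased positions and the decoder observes $\mathcal V$ and $\mathbf y^{\mathcal V}=(\mathbf c\circ\mathbf s)^{\mathcal V}$. For a matrix/vector, superscript $\mathcal A$ denotes the rows indexed by the set $\mathcal A$. Encoding: with $\mathcal U$ the set of defects and $\mathbf b^{\mathcal U}=(G_1\mathbf m)^{\mathcal U}+\mathbf s^{\mathcal U}$, find $\mathbf d\in\{0,1\}^l$ with $G_0^{\mathcal U}\mathbf d=\mathbf b^{\mathcal U}$ and write $\mathbf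 c=G_1\mathbf m+G_0\mathbf d$; encoding failure ($E=0$) if no such $\mathbf d$ exists. Decoding: solve $\widetilde G^{\mathcal V}\binom{\widehat{\mathbf m}}{\widehat{\mathbf d}}=\mathbf y^{\mathcal V}$. The event $\{\widehat{\mathbf m}\neq\mathbf m\}$ (recovery failure) is declared if encoding fails, or if the solution set of this linear system contains vectors with different message parts $\widehat{\mathbf m}$. *)

From HB Require Import structures.
From mathcomp Require Import all_boot all_order all_algebra.
Set Implicit Arguments. Unset Strict Implicit. Unset Printing Implicit Defensive.
Import Order.TTheory GRing.Theory Num.Theory.

Local Open Scope ring_scope.

Notation F2 := ('F_2).

Definition wt (n : nat) (v : 'cV[F2]_n) : nat := #|[set i : 'I_n | v i 0 != 0]|.

Definition Gt (n k l : nat) (G1 : 'M[F2]_(n, k)) (G0 : 'M[F2]_(n, l))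
  : 'M[F2]_(n, k + l) := row_mx G1 G0.

Definition A_w n k l (G1 : 'M[F2]_(n, k)) (G0 : 'M[F2]_(n, l)) (w : nat) : nat :=
  #|[set c : 'cV[F2]_n | (wt c == w) && [exists x : 'cV[F2]_(k + l), Gt G1 G0 *m x == c]]|.

(* d1 = min weight of G1 m' + G0 d' over m' <> 0; convention n+1 if no such m' (k = 0) *)
Definition d1 n k l (G1 : 'M[F2]_(n, k)) (G0 : 'M[F2]_(n, l)) : nat :=
  \big[minn/n.+1]_(m' : 'cV[F2]_k | m' != 0)
     \big[minn/n.+1]_(d' : 'cV[F2]_l) wt (G1 *m m' + G0 *m d').

Definition B0_w n l (G0 : 'M[F2]_(n, l)) (w : nat) : nat :=
  #|[set x : 'cV[F2]_n | (G0^T *m x == 0) && (wt x == w)]|.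

(* d0 = min nonzero weight of C0^perp; convention n+1 if C0^perp = {0} *)
Definition d0 n l (G0 : 'M[F2]_(n, l)) : nat :=
  \big[minn/n.+1]_(x : 'cV[F2]_n | (G0^T *m x == 0) && (x != 0)) wt x.

Definition enc_ok n k l (G1 : 'M[F2]_(n, k)) (G0 : 'M[F2]_(n, l)) (m : 'cV[F2]_k)
  (U : {set 'I_n}) (s : 'cV[F2]_n) (d : 'cV[F2]_l) : bool :=
  [forall i in U, (G0 *m d) i 0 == (G1 *m m) i 0 + s i 0].

(* codeword written by the encoder (some solution d is picked; 0 if encoding fails) *)
Definition codeword n k l (G1 : 'M[F2]_(n, k)) (G0 : 'M[F2]_(n, l)) (m : 'cV[F2]_k)
  (U : {set 'I_n}) (s : 'cV[F2]_n) : 'cV[F2]_n :=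
  match [pick d | enc_ok G1 G0 m U s d] with
  | Some d => G1 *m m + G0 *m d
  | None => G1 *m m
  end.

Definition stored n (c : 'cV[F2]_n) (U : {set 'I_n}) (s : 'cV[F2]_n) : 'cV[F2]_n :=
  \col_i (if i \in U then s i 0 else c i 0).

Definition dec_sol n k l (G1 : 'M[F2]_(n, k)) (G0 : 'M[F2]_(n, l))
  (V : {set 'I_n}) (y : 'cV[F2]_n) (x : 'cV[F2]_(k + l)) : bool :=
  [forall i in V, (Gt G1 G0 *m x) i 0 == y i 0].

Definition fail n k l (G1 : 'M[F2]_(n, k)) (G0 : 'M[F2]_(n, l)) (m : 'cV[F2]_k)
  (U : {set 'I_n}) (s : 'cV[F2]_n) (Er : {set 'I_n}) : bool :=
  let V := ~: Er in
  let y := stored (codeword G1 G0 m U s) U s in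
  ~~ [exists d, enc_ok G1 G0 m U s d]
  || [exists x1, exists x2,
        [&& dec_sol G1 G0 V y x1, dec_sol G1 G0 V y x2 &
            usubmx x1 != usubmx x2 :> 'cV[F2]_k]].

(* P(m^ <> m) on BDEC(beta, alpha): defects iid Bernoulli(beta), stuck values
   iid uniform (only used at defective cells), erasures iid Bernoulli(alpha). *)
Definition Pfail (R : realFieldType) (beta alpha : R) n k l
  (G1 : 'M[F2]_(n, k)) (G0 : 'M[F2]_(n, l)) (m : 'cV[F2]_k) : R :=
  \sum_(U : {set 'I_n}) \sum_(s : 'cV[F2]_n) \sum_(Er : {set 'I_n})
    (beta ^+ #|U| * (1 - beta) ^+ (n - #|U|)%N * (2%:R ^- n)
     * (alpha ^+ #|Er| * (1 - alpha) ^+ (n - #|Er|)%N)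
     * (fail G1 G0 m U s Er)%:R).

(* A failure has one of two causes.  If encoding fails, the system
   G0^U d = b^U is unsolvable, so (Fredholm alternative) a nonzero word of
   C0^perp, of weight >= d0, is supported inside the defect set U.  If decoding
   is ambiguous, two solutions with different message parts differ by a
   codeword with nonzero message part, of weight >= d1, which vanishes on the
   unerased positions, i.e. is supported inside the erasure set.  Bound the
   failure indicator by the number of such words supported in the random set
   and average: a word of weight w lies inside C(n-w, u-w) of the sets of size
   u, which gives the first bound.  The second one follows from
   C(n,w) C(n-w,u-w) = C(n,u) C(u,w), sum_w C(u,w) = 2^u and
   sum_u C(n,u) a^u (1-a)^(n-u) 2^u = (1 + a)^n. *)

From HB Require Import structures.
From mathcomp Require Import all_boot all_order all_algebra.
From mathcomp Require Import zify ring.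
Set Implicit Arguments. Unset Strict Implicit. Unset Printing Implicit Defensive.
Import Order.TTheory GRing.Theory Num.Theory.
Local Open Scope ring_scope.

Definition supp n (x : 'cV[F2]_n) : {set 'I_n} := [set i | x i 0 != 0].

Lemma bigminn_le_cond (I : finType) (P : pred I) (F : I -> nat) x0 j :
  P j -> (\big[minn/x0]_(i | P i) F i <= F j)%N.
Proof. exact: (@bigmin_le_cond _ nat I x0 j P F). Qed.

Lemma d0_le_wt n l (G0 : 'M[F2]_(n, l)) (x : 'cV[F2]_n) :
  G0^T *m x == 0 -> x != 0 -> (d0 G0 <= wt x)%N.
Proof. by move=> dual_x nz_x; apply: bigminn_le_cond; rewrite dual_x nz_x. Qed.

Lemma mul_Gt n k l (G1 : 'M[F2]_(n, k)) (G0 : 'M[F2]_(n, l)) (z : 'cV[F2]_(k + l)) :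
  Gt G1 G0 *m z = G1 *m usubmx z + G0 *m dsubmx z.
Proof. by rewrite -{1}(vsubmxK z) mul_row_col. Qed.

Lemma d1_le_wt n k l (G1 : 'M[F2]_(n, k)) (G0 : 'M[F2]_(n, l)) (z : 'cV[F2]_(k + l)) :
  usubmx z != 0 -> (d1 G1 G0 <= wt (Gt G1 G0 *m z))%N.
Proof.
move=> nz_msg; rewrite mul_Gt /d1.
apply: leq_trans (bigminn_le_cond
  (fun m' => \big[minn/n.+1]_(d' : 'cV[F2]_l) wt (G1 *m m' + G0 *m d')) _ nz_msg) _.
exact: bigminn_le_cond.
Qed.

Lemma nsubmx_separating_vector (F : fieldType) m n (A : 'M[F]_(m, n)) (b : 'rV_n) :
  ~~ (b <= A)%MS -> exists2 y : 'cV_n, A *m y = 0 & b *m y != 0.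
Proof.
rewrite submxE => /matrix0Pn [i [j bCj]].
exists (col j (cokermx A)); first by rewrite colE mulmxA mulmx_coker mul0mx.
apply: contra bCj; rewrite colE mulmxA -colE => /eqP/matrixP/(_ i 0).
by rewrite !mxE ord1 => ->.
Qed.

Definition mask_mx (R : pzSemiRingType) n (U : {set 'I_n}) : 'M[R]_n :=
  diag_mx (\row_i (i \in U)%:R).
Arguments mask_mx {R n} U.

Lemma mask_mulmxE (R : pzSemiRingType) n p (U : {set 'I_n}) (A : 'M[R]_(n, p)) i j :
  (mask_mx U *m A) i j = if i \in U then A i j else 0.
Proof. by rewrite mul_diag_mx !mxE; case: (i \in U); rewrite ?mul1r ?mul0r. Qed.

Lemma encoding_failure_witness n k l (G1 : 'M[F2]_(n, k)) (G0 : 'M[F2]_(n, l))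
    (m : 'cV[F2]_k) (U : {set 'I_n}) (s : 'cV[F2]_n) :
  ~~ [exists d, enc_ok G1 G0 m U s d] ->
  exists x : 'cV[F2]_n, [&& G0^T *m x == 0, x != 0 & supp x \subset U].
Proof.
move=> no_enc; set b := G1 *m m + s; set M : 'M[F2]_n := mask_mx U.
have trM : M^T = M by rewrite tr_diag_mx.
have : ~~ ((M *m b)^T <= (M *m G0)^T)%MS.
  apply: contra no_enc => /submxP [v /(congr1 trmx)].
  rewrite trmxK trmx_mul trmxK => Mb; apply/existsP; exists v^T.
  apply/forallP => i; apply/implyP => iU.
  move/matrixP/(_ i 0): Mb; rewrite -mulmxA !mask_mulmxE iU => <-.
  by rewrite !mxE.
case/nsubmx_separating_vector => y G0My bMy.
exists (M *m y); apply/and3P; split.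
- by rewrite -G0My trmx_mul trM mulmxA.
- apply: contra bMy => /eqP My0.
  by rewrite trmx_mul trM -mulmxA My0 mulmx0.
- by apply/subsetP => i; rewrite inE mask_mulmxE; case: (i \in U); rewrite ?eqxx.
Qed.

Lemma decoding_ambiguity_codeword n k l (G1 : 'M[F2]_(n, k)) (G0 : 'M[F2]_(n, l))
    (Er : {set 'I_n}) (y : 'cV[F2]_n) x1 x2 :
  dec_sol G1 G0 (~: Er) y x1 -> dec_sol G1 G0 (~: Er) y x2 ->
  usubmx x1 != usubmx x2 :> 'cV[F2]_k ->
  exists c : 'cV[F2]_n,
    [&& [exists z, Gt G1 G0 *m z == c], (d1 G1 G0 <= wt c)%N & supp c \subset Er].
Proof.
move=> /forallP sol1 /forallP sol2 msg_neq.
exists (Gt G1 G0 *m (x1 - x2)); apply/and3P; split.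
- by apply/existsP; exists (x1 - x2).
- by apply: d1_le_wt; rewrite linearB /= subr_eq0.
- apply/subsetP => i; rewrite inE; apply: contraR => iEr.
  have iV : i \in ~: Er by rewrite inE.
  move: (implyP (sol1 i) iV) (implyP (sol2 i) iV) => /eqP e1 /eqP e2.
  by rewrite mulmxBr mxE e1 mxE e2 subrr.
Qed.

Definition count_supported_in n (P : pred 'cV[F2]_n) (U : {set 'I_n}) : nat :=
  #|[set x | P x && (supp x \subset U)]|.

(* Weight at least d0 (rather than nonzero) makes the weight distribution of
   these witnesses vanish below d0. *)
Definition dual_witness n l (G0 : 'M[F2]_(n, l)) : pred 'cV[F2]_n :=
  fun x => (G0^T *m x == 0) && (d0 G0 <= wt x)%N.

Definition code_witness n k l (G1 : 'M[F2]_(n, k)) (G0 : 'M[F2]_(n, l)) :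
  pred 'cV[F2]_n :=
  fun c => [exists z, Gt G1 G0 *m z == c] && (d1 G1 G0 <= wt c)%N.

Lemma count_supported_in_gt0 n (P : pred 'cV[F2]_n) (U : {set 'I_n}) x :
  P x -> supp x \subset U -> (0 < count_supported_in P U)%N.
Proof. by move=> Px xU; apply/card_gt0P; exists x; rewrite inE Px xU. Qed.

Lemma fail_le_count_supported n k l (G1 : 'M[F2]_(n, k)) (G0 : 'M[F2]_(n, l))
    (m : 'cV[F2]_k) U s Er :
  (fail G1 G0 m U s Er <=
     count_supported_in (dual_witness G0) U
     + count_supported_in (code_witness G1 G0) Er)%N.
Proof.
rewrite /fail; case: (boolP [exists d, enc_ok G1 G0 m U s d]) => [_|no_enc] /=.
  case: existsP => [[x1 /existsP [x2 /and3P [sol1 sol2 neq]]]|_] //.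
  have [c /and3P [cC cwt cEr]] := decoding_ambiguity_codeword sol1 sol2 neq.
  by rewrite ltn_addl // (@count_supported_in_gt0 _ _ _ c) //; apply/andP.
have [x /and3P [dual_x nz_x xU]] := encoding_failure_witness no_enc.
by rewrite ltn_addr // (@count_supported_in_gt0 _ _ _ x) //;
  rewrite /dual_witness dual_x d0_le_wt.
Qed.

Lemma sum_by_level (R : pzSemiRingType) (T : finType) (P : pred T) (f : T -> nat) N
    (F : nat -> R) :
  (forall x, P x -> (f x <= N)%N) ->
  \sum_(x | P x) F (f x) = \sum_(w < N.+1) #|[set x | P x && (f x == w)]|%:R * F w.
Proof.
move=> fN; rewrite (partition_big (fun x => inord (f x) : 'I_N.+1) xpredT) //=.
apply: eq_bigr => w _; rewrite mulr_natl -sumr_const.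
have level x : P x -> (inord (f x) == w :> 'I_N.+1) = (f x == w).
  by move=> Px; rewrite -val_eqE /= inordK ?ltnS ?fN.
apply: eq_big => x; rewrite ?inE; first by case: (boolP (P x)) => //= /level.
by case/andP=> Px; rewrite level // => /eqP ->.
Qed.

Lemma card_supsets (T : finType) (S : {set T}) u :
  #|[set U : {set T} | (S \subset U) && (#|U| == u)]| =
  ((#|S| <= u) * 'C(#|T| - #|S|, u - #|S|))%N.
Proof.
have [Su|Su] := leqP #|S| u; last first.
  apply: eq_card0 => U; rewrite inE; apply/negP => /andP[/subset_leq_card SU /eqP UE].
  by rewrite -UE ltnNge SU in Su.
rewrite mul1n -(cardsC S) addKn -cards_draws.
have disjointK (B : {set T}) : B \subset ~: S -> (B :|: S) :\: S = B.
  by move=> BS; rewrite setDUl setDv setU0; apply/setDidPl; rewrite disjoints_subset.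
rewrite -[RHS](@card_in_imset _ _ (fun B => B :|: S)); last first.
  by move=> B1 B2; rewrite !inE => /andP[B1S _] /andP[B2S _] eqB;
    rewrite -(disjointK _ B1S) -(disjointK _ B2S) eqB.
congr #|(_ : {set _})|; apply/setP => U; rewrite inE; apply/andP/imsetP.
  move=> [SU /eqP UE]; exists (U :\: S).
    by rewrite inE subsetDr cardsD (setIidPr SU) UE eqxx.
  by rewrite setUC -{1}(setIidPr SU) setID.
move=> [B]; rewrite inE => /andP[BS /eqP BE] ->; split; first exact: subsetUr.
rewrite cardsU (_ : B :&: S = set0) ?cards0 ?subn0 ?BE ?subnK //.
by apply/disjoint_setI0; rewrite disjoints_subset.
Qed.

Lemma sum_count_supported_in (R : comPzSemiRingType) n (P : pred 'cV[F2]_n)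
    (g : nat -> R) :
  \sum_(U : {set 'I_n}) g #|U| * (count_supported_in P U)%:R =
  \sum_(u < n.+1) g u *
    \sum_(w < u.+1) #|[set x | P x && (wt x == w)]|%:R * 'C(n - w, u - w)%:R.
Proof.
have supsets (x : 'cV[F2]_n) : \sum_(U : {set 'I_n} | supp x \subset U) g #|U| =
    \sum_(u < n.+1) g u * ((wt x <= u) * 'C(n - wt x, u - wt x))%:R.
  rewrite (@sum_by_level _ _ _ _ n) => [|U _]; last first.
    by rewrite -[X in (_ <= X)%N](card_ord n) max_card.
  by apply: eq_bigr => u _; rewrite card_supsets card_ord mulrC.
transitivity (\sum_(x | P x) \sum_(U : {set 'I_n} | supp x \subset U) g #|U|).
  rewrite (exchange_big_dep xpredT) //=; apply: eq_bigr => U _.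
  by rewrite mulr_natr -sumr_const; apply: eq_bigl => x; rewrite inE.
under eq_bigr do rewrite supsets.
rewrite (exchange_big_dep xpredT) //=; apply: eq_bigr => u _.
rewrite -mulr_sumr; congr (_ * _).
transitivity (\sum_(x | P x && (wt x <= u)%N) ('C(n - wt x, u - wt x)%:R : R)).
  rewrite [RHS]big_mkcondr; apply: eq_big => [x|x _]; first by rewrite andbT.
  by case: ifP => _; rewrite ?mul1n ?mul0n.
rewrite (@sum_by_level _ _ _ (@wt n) u (fun w => 'C(n - w, u - w)%:R));
  last by move=> x /andP[].
apply: eq_bigr => w _; congr (_%:R * _); apply: eq_card => x; rewrite !inE.
by case: eqP => [->|]; rewrite ?andbT ?andbF // -ltnS ltn_ord andbT.
Qed.

Lemma sum_ord_from (R : nmodType) N D (F : nat -> R) :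
  \sum_(w < N) (if (D <= w)%N then F w else 0) = \sum_(D <= w < N) F w.
Proof. by rewrite big_geq_mkord [RHS]big_mkcond. Qed.

Lemma card_wt_from n (P : pred 'cV[F2]_n) D w :
  #|[set x | (P x && (D <= wt x)%N) && (wt x == w)]| =
  if (D <= w)%N then #|[set x | P x && (wt x == w)]| else 0%N.
Proof.
case: ifP => Dw; last first.
  by apply: eq_card0 => x; rewrite !inE; case: eqP => [->|]; rewrite ?Dw ?andbF.
by apply: eq_card => x; rewrite !inE; case: eqP => [->|]; rewrite ?Dw ?andbT ?andbF.
Qed.

Lemma sum_weight_enum_from (R : pzSemiRingType) n (g : nat -> R) D (N' N : nat -> nat) :
  (forall w, N' w = if (D <= w)%N then N w else 0%N) ->
  \sum_(u < n.+1) g u * \sum_(w < u.+1) (N' w)%:R * 'C(n - w, u - w)%:R =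
  \sum_(D <= u < n.+1) g u * \sum_(D <= w < u.+1) ((N w)%:R * 'C(n - w, u - w)%:R).
Proof.
move=> N'E; rewrite -sum_ord_from; apply: eq_bigr => u _; rewrite -sum_ord_from.
rewrite (eq_bigr (fun w : 'I_u.+1 =>
    if (D <= w)%N then (N w)%:R * 'C(n - w, u - w)%:R else 0)); last first.
  by move=> w _; rewrite N'E; case: ifP; rewrite ?mul0r.
case: leqP => // uD; rewrite big1 ?mulr0 // => w _.
by rewrite leqNgt (leq_trans (ltn_ord w) uD).
Qed.

Lemma card_dual_witness_wt n l (G0 : 'M[F2]_(n, l)) w :
  #|[set x | dual_witness G0 x && (wt x == w)]| =
  if (d0 G0 <= w)%N then B0_w G0 w else 0%N.
Proof. exact: card_wt_from. Qed.

Lemma card_code_witness_wt n k l (G1 : 'M[F2]_(n, k)) (G0 : 'M[F2]_(n, l)) w :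
  #|[set c | code_witness G1 G0 c && (wt c == w)]| =
  if (d1 G1 G0 <= w)%N then A_w G1 G0 w else 0%N.
Proof.
rewrite card_wt_from; case: ifP => // _.
by apply: eq_card => c; rewrite !inE andbC.
Qed.

Lemma sum_set_binomial_weights (R : comPzRingType) (T : finType) (a : R) :
  \sum_(U : {set T}) a ^+ #|U| * (1 - a) ^+ (#|T| - #|U|) = 1.
Proof.
rewrite (@sum_by_level _ _ xpredT (fun U : {set T} => #|U|) #|T|
           (fun u => a ^+ u * (1 - a) ^+ (#|T| - u))) => [|U _]; last exact: max_card.
transitivity ((1 - a + a) ^+ #|T|); last by rewrite subrK expr1n.
rewrite exprDn; apply: eq_bigr => u _.
have -> : #|[set U : {set T} | true && (#|U| == u)]| = 'C(#|T|, u) by exact: card_draws.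
by rewrite mulr_natl mulrC.
Qed.

Lemma sum_uniform_cV (R : numFieldType) n : \sum_(s : 'cV[F2]_n) (2%:R ^- n : R) = 1.
Proof.
rewrite sumr_const card_mx card_Fp // muln1 -[_ *+ (2 ^ n)%N]mulr_natr natrX mulVf //.
by rewrite expf_neq0 // pnatr_eq0.
Qed.

Lemma sum_product_weightsD (R : comPzRingType) (I J K : finType)
    (p : I -> R) (q : J -> R) (r : K -> R) (A : I -> R) (B : K -> R) :
  \sum_i p i = 1 -> \sum_j q j = 1 -> \sum_k r k = 1 ->
  \sum_i \sum_j \sum_k p i * q j * r k * (A i + B k) =
  \sum_i p i * A i + \sum_k r k * B k.
Proof.
move=> p1 q1 r1; set EB := \sum_k r k * B k.
have inner i j : \sum_k p i * q j * r k * (A i + B k) = q j * (p i * A i + p i * EB).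
  rewrite (eq_bigr (fun k => q j * (p i * A i * r k + p i * (r k * B k)))) => [|k _].
    by rewrite -mulr_sumr big_split /= -!mulr_sumr r1 mulr1.
  ring.
under eq_bigr => i _ do under eq_bigr => j _ do rewrite inner.
under eq_bigr => i _ do rewrite -mulr_suml q1 mul1r.
by rewrite big_split /= -mulr_suml p1 mul1r.
Qed.

Lemma bin_trinomial n u w : (w <= u)%N -> (u <= n)%N ->
  ('C(n, w) * 'C(n - w, u - w) = 'C(n, u) * 'C(u, w))%N.
Proof.
move=> wu un; apply/eqP.
rewrite -(eqn_pmul2r (_ : 0 < w`! * (u - w)`! * (n - u)`!)%N); last first.
  by rewrite !muln_gt0 !fact_gt0.
have := bin_fact (leq_sub2r w un); rewrite (_ : n - w - (u - w) = n - u)%N; last lia.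
have := bin_fact (leq_trans wu un); have := bin_fact wu; have := bin_fact un.
move=> fact_nu fact_uw fact_nw fact_nwuw; apply/eqP.
transitivity ('C(n, w) * (w`! * ('C(n - w, u - w) * ((u - w)`! * (n - u)`!))))%N.
  by ring.
rewrite fact_nwuw fact_nw -fact_nu -fact_uw; ring.
Qed.

Lemma sum_bin_natr (R : comPzSemiRingType) u :
  \sum_(w < u.+1) ('C(u, w)%:R : R) = 2%:R ^+ u.
Proof.
rewrite -[2%:R]/(1 + 1 : R) exprDn.
by apply: eq_bigr => w _; rewrite !expr1n mulr1.
Qed.

Lemma sum_binomial_weights_exp2 (R : comPzRingType) n (a : R) :
  \sum_(u < n.+1) a ^+ u * (1 - a) ^+ (n - u) * ('C(n, u)%:R * 2%:R ^+ u) =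
  (1 + a) ^+ n.
Proof.
rewrite (_ : 1 + a = 1 - a + 2%:R * a); last by rewrite mulr_natl mulr2n addrA subrK.
rewrite exprDn; apply: eq_bigr => u _; rewrite exprMn -mulr_natr; ring.
Qed.

Lemma sum_binomial_tail_le (R : realFieldType) n (a c : R) D (N : nat -> nat) :
  0 <= a <= 1 -> 0 <= c ->
  (forall w, (D <= w <= n)%N -> ((N w)%:R : R) <= c * 'C(n, w)%:R) ->
  \sum_(D <= u < n.+1) a ^+ u * (1 - a) ^+ (n - u) *
     \sum_(D <= w < u.+1) ((N w)%:R * 'C(n - w, u - w)%:R)
  <= c * (1 + a) ^+ n.
Proof.
move=> /andP[a_ge0 a_le1] c_ge0 N_le.
have weight_ge0 u : 0 <= a ^+ u * (1 - a) ^+ (n - u).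
  by rewrite mulr_ge0 ?exprn_ge0 ?subr_ge0.
have inner_le (u : 'I_n.+1) : \sum_(D <= w < u.+1) ((N w)%:R * 'C(n - w, u - w)%:R)
    <= c * ('C(n, u)%:R * 2%:R ^+ u).
  rewrite -sum_ord_from -(sum_bin_natr R u) !mulr_sumr; apply: ler_sum => w _.
  have wu : (w <= u)%N by rewrite -ltnS.
  have un : (u <= n)%N by rewrite -ltnS.
  rewrite -[X in _ <= c * X]natrM -bin_trinomial // natrM mulrA.
  case: ifP => Dw; last by rewrite !mulr_ge0.
  by rewrite ler_wpM2r // N_le // Dw (leq_trans wu un).
rewrite -sum_binomial_weights_exp2 mulr_sumr -sum_ord_from; apply: ler_sum => u _.
rewrite mulrCA; case: ifP => _; first by rewrite ler_wpM2l.
by rewrite mulr_ge0 // mulr_ge0 // mulr_ge0 ?exprn_ge0.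
Qed.

Theorem theorem4 (R : realFieldType) (beta alpha : R) (n k l : nat)
  (G1 : 'M['F_2]_(n, k)) (G0 : 'M['F_2]_(n, l)) (m : 'cV['F_2]_k) :
  0 <= beta <= 1 -> 0 <= alpha <= 1 ->
  \rank (Gt G1 G0) = (k + l)%N ->
  let r := (n - k - l)%N in
  let D0 := d0 G0 in
  let D1 := d1 G1 G0 in
  (Pfail beta alpha G1 G0 m <=
     \sum_(D0 <= u < n.+1) beta ^+ u * (1 - beta) ^+ (n - u)%N *
        \sum_(D0 <= w < u.+1) ((B0_w G0 w)%:R * 'C(n - w, u - w)%:R)
   + \sum_(D1 <= e < n.+1) alpha ^+ e * (1 - alpha) ^+ (n - e)%N *
        \sum_(D1 <= w < e.+1) ((A_w G1 G0 w)%:R * 'C(n - w, e - w)%:R))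
  /\
  ((forall w, (D0 <= w <= n)%N -> ((B0_w G0 w)%:R : R) <= 2%:R ^- l * 'C(n, w)%:R) ->
   (forall w, (D1 <= w <= n)%N -> ((A_w G1 G0 w)%:R : R) <= 2%:R ^- r * 'C(n, w)%:R) ->
   Pfail beta alpha G1 G0 m <=
     2%:R ^- l * (1 + beta) ^+ n + 2%:R ^- r * (1 + alpha) ^+ n).
Proof.
move=> /andP[beta_ge0 beta_le1] /andP[alpha_ge0 alpha_le1] _ r D0 D1.
have weights_sum1 (a : R) : \sum_(U : {set 'I_n}) a ^+ #|U| * (1 - a) ^+ (n - #|U|) = 1.
  by have := sum_set_binomial_weights 'I_n a; rewrite card_ord.
have union_bound : Pfail beta alpha G1 G0 m <=
    \sum_(U : {set 'I_n}) \sum_(s : 'cV[F2]_n) \sum_(Er : {set 'I_n})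
      beta ^+ #|U| * (1 - beta) ^+ (n - #|U|) * 2%:R ^- n
      * (alpha ^+ #|Er| * (1 - alpha) ^+ (n - #|Er|))
      * ((count_supported_in (dual_witness G0) U)%:R
         + (count_supported_in (code_witness G1 G0) Er)%:R).
  apply: ler_sum => U _; apply: ler_sum => s _; apply: ler_sum => Er _.
  rewrite ler_wpM2l ?mulr_ge0 ?invr_ge0 ?exprn_ge0 ?subr_ge0 ?ler0n //.
  by rewrite -natrD ler_nat fail_le_count_supported.
rewrite (sum_product_weightsD _ _ (weights_sum1 beta) (sum_uniform_cV R n)
           (weights_sum1 alpha)) in union_bound.
pose bw (a : R) u := a ^+ u * (1 - a) ^+ (n - u).
rewrite (sum_count_supported_in _ (bw beta)) (sum_count_supported_in _ (bw alpha))
  (sum_weight_enum_from n (bw beta) (card_dual_witness_wt G0))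
  (sum_weight_enum_from n (bw alpha) (card_code_witness_wt G1 G0)) in union_bound.
split=> // B_le A_le; apply: le_trans union_bound _.
by rewrite lerD ?sum_binomial_tail_le ?invr_ge0 ?exprn_ge0 ?ler0n ?beta_ge0 ?alpha_ge0.
Qed.
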